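(* For all terms $q,q'$ the following are equivalent: (1) $q=_{\mathrm{CLC}_0}q'$; (2) $q=_{\mathrm{CLC}}q'$; (3) $q=_{\mathrm{CLC}^+}q'$.
   Context: Terms are built from variables and the constants $C,T,F,K,S$ by binary application (left-associative). $\mathrm{CLC}_0$ is the (unconditional) term rewriting system with rules $C\,T\,x\,y\to x$; $C\,F\,x\,y\to y$; $C\,z\,x\,x\to x$; $K\,x\,y\to x$; $S\,x\,y\,z\to x\,z\,(y\,z)$. $\mathrm{CLC}$ is the conditional system with rules $C\,T\,x\,y\to x$; $C\,F\,x\,y\to y$; $C\,z\,x\,y\to x \Leftarrow x=y$; $K\,x\,y\to x$; $S\,x\,y\,z\to x\,z\,(y\,z)$, where $=$ is convertibility in the system itself, defined by levels: $R_0$ interprets the condition as the empty relation, $R_{n+1}$ interprets $=$ as the conversion relation of $\to_{R_n}$, and $\to_{\mathrm{CLC}}=\bigcup_n\to_{R_n}$. $\mathrm{CLC}^+$ is defined in the same way from the rules of $\mathrm{CLC}$ plus $C\,z\,x\,y\to y\Leftarrow x=y$. For a system $R$, $=_R$ denotes the conversion relation (reflexive–symmetric–transitive closure of one-step rewriting closed under contexts). *)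

From Stdlib Require Import Relations.

Inductive term : Type :=
| Var : nat -> term
| Cc : term
| Tc : term
| Fc : term
| Kc : term
| Sc : term
| App : term -> term -> term.

Definition app2 (a b c : term) : term := App (App a b) c.
Definition app3 (a b c d : term) : term := App (App (App a b) c) d.

Inductive step0 : term -> term -> Prop :=
| s0_CT x y : step0 (app3 Cc Tc x y) x
| s0_CF x y : step0 (app3 Cc Fc x y) y
| s0_Cxx z x : step0 (app3 Cc z x x) x
| s0_K x y : step0 (app2 Kc x y) x
| s0_S x y z : step0 (app3 Sc x y z) (App (App x z) (App y z))
| s0_appl t t' u : step0 t t' -> step0 (App t u) (App t' u)
| s0_appr t u u' : step0 u u' -> step0 (App t u) (App t u').

(* One-step rewriting for CLC (plus = false) or CLC^+ (plus = true),
   where the condition "x = y" is interpreted by the relation E. *)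
Inductive cstep (plus : bool) (E : term -> term -> Prop) : term -> term -> Prop :=
| cs_CT x y : cstep plus E (app3 Cc Tc x y) x
| cs_CF x y : cstep plus E (app3 Cc Fc x y) y
| cs_Cl z x y : E x y -> cstep plus E (app3 Cc z x y) x
| cs_Cr z x y : plus = true -> E x y -> cstep plus E (app3 Cc z x y) y
| cs_K x y : cstep plus E (app2 Kc x y) x
| cs_S x y z : cstep plus E (app3 Sc x y z) (App (App x z) (App y z))
| cs_appl t t' u : cstep plus E t t' -> cstep plus E (App t u) (App t' u)
| cs_appr t u u' : cstep plus E u u' -> cstep plus E (App t u) (App t u').

Definition conv (R : term -> term -> Prop) : term -> term -> Prop :=
  clos_refl_sym_trans term R.

Fixpoint level (plus : bool) (n : nat) : term -> term -> Prop :=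
  match n with
  | O => cstep plus (fun _ _ => False)
  | S m => cstep plus (conv (level plus m))
  end.

Definition cstep_union (plus : bool) (t u : term) : Prop :=
  exists n, level plus n t u.

Definition conv_CLC0 : term -> term -> Prop := conv step0.
Definition conv_CLC : term -> term -> Prop := conv (cstep_union false).
Definition conv_CLCplus : term -> term -> Prop := conv (cstep_union true).

(* Every rule of CLC_0 is a rule of the first level R_1 of CLC and of CLC^+
   (the rule C z x x -> x is an instance of C z x y -> x under the trivially
   satisfied condition x = x), so =_CLC0 is contained in =_CLC and =_CLC+.
   Conversely, a conditional step C z x y -> x (or -> y) whose condition
   x = y holds in CLC_0-conversion is simulated in CLC_0 by rewriting y to x
   (resp. x to y) and then applying C z x x -> x.  By induction on the level
   every step of R_n, hence of CLC and CLC^+, is a CLC_0-conversion. *)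

From Stdlib Require Import Relations.

Lemma conv_least (R S : term -> term -> Prop) :
  equivalence term S -> (forall a b, R a b -> S a b) ->
  forall a b, conv R a b -> S a b.
Proof.
  intros [Srefl Strans Ssym] HRS a b c; induction c.
  - now apply HRS.
  - apply Srefl.
  - now apply Ssym.
  - eapply Strans; eassumption.
Qed.

Lemma conv_equivalence (R : term -> term -> Prop) : equivalence term (conv R).
Proof.
  split.
  - intro a; apply rst_refl.
  - intros a b c; apply rst_trans.
  - intros a b; apply rst_sym.
Qed.

Lemma conv_mono (R R' : term -> term -> Prop) :
  (forall a b, R a b -> R' a b) -> forall a b, conv R a b -> conv R' a b.
Proof.
  intro HRR'; apply conv_least; [apply conv_equivalence |].
  intros a b H; apply rst_step, HRR', H.
Qed.

Lemma conv_context (R : term -> term -> Prop) (f : term -> term) :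
  (forall a b, R a b -> R (f a) (f b)) ->
  forall a b, conv R a b -> conv R (f a) (f b).
Proof.
  intro Hf.
  apply (conv_least R (fun a b => conv R (f a) (f b))).
  - split.
    + intro a; apply rst_refl.
    + intros a b c; apply rst_trans.
    + intros a b; apply rst_sym.
  - intros a b H; apply rst_step, Hf, H.
Qed.

Lemma conv0_app t t' u u' :
  conv_CLC0 t t' -> conv_CLC0 u u' -> conv_CLC0 (App t u) (App t' u').
Proof.
  intros Ht Hu; apply rst_trans with (App t' u).
  - apply (conv_context step0 (fun a => App a u)); [intros a b; apply s0_appl | exact Ht].
  - apply (conv_context step0 (App t')); [intros a b; apply s0_appr | exact Hu].
Qed.

Lemma step0_level1 plus t u : step0 t u -> level plus 1 t u.
Proof.
  intro H; induction H; simpl.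
  - apply cs_CT.
  - apply cs_CF.
  - apply cs_Cl, rst_refl.
  - apply cs_K.
  - apply cs_S.
  - now apply cs_appl.
  - now apply cs_appr.
Qed.

(* A conditional step whose condition is sound for CLC_0-conversion is a
   CLC_0-conversion: both conditional C-rules reduce to C z x x -> x. *)
Lemma cstep_conv0 plus (E : term -> term -> Prop) :
  (forall a b, E a b -> conv_CLC0 a b) ->
  forall t u, cstep plus E t u -> conv_CLC0 t u.
Proof.
  intros HE t u H; induction H.
  - apply rst_step, s0_CT.
  - apply rst_step, s0_CF.
  - apply rst_trans with (app3 Cc z x x).
    + apply conv0_app; [apply rst_refl | apply rst_sym, HE, H].
    + apply rst_step, s0_Cxx.
  - apply rst_trans with (app3 Cc z y y).
    + apply conv0_app; [apply conv0_app; [apply rst_refl | apply HE, H0] | apply rst_refl].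
    + apply rst_step, s0_Cxx.
  - apply rst_step, s0_K.
  - apply rst_step, s0_S.
  - apply conv0_app; [exact IHcstep | apply rst_refl].
  - apply conv0_app; [apply rst_refl | exact IHcstep].
Qed.

Lemma level_conv0 plus n : forall t u, level plus n t u -> conv_CLC0 t u.
Proof.
  induction n as [| n IHn]; simpl; apply cstep_conv0.
  - intros a b [].
  - apply conv_least; [apply conv_equivalence | exact IHn].
Qed.

Lemma conv_union_iff plus q q' :
  conv (cstep_union plus) q q' <-> conv_CLC0 q q'.
Proof.
  split.
  - apply conv_least; [apply conv_equivalence |].
    intros a b [n H]; exact (level_conv0 plus n a b H).
  - apply conv_mono; intros a b H; exists 1; now apply step0_level1.
Qed.

Theorem mainTheorem2 : forall q q' : term,
  (conv_CLC0 q q' <-> conv_CLC q q') /\ (conv_CLC q q' <-> conv_CLCplus q q').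
Proof.
  intros q q'; unfold conv_CLC, conv_CLCplus.
  pose proof (conv_union_iff false q q') as Hclc.
  pose proof (conv_union_iff true q q') as Hplus.
  tauto.
Qed.
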